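(* For a smooth function $f:\mathbb R^2\to\mathbb R$ let $v(f)=(-\partial_{x_2}f,\partial_{x_1}f)$. Let $\mathcal F=\{v(x_1),v(x_2),v(x_1^2x_2^2)\}=\{(0,1),(-1,0),(-2x_1^2x_2,2x_1x_2^2)\}$. Then $\operatorname{Lie}\mathcal F=\{v(f): f\in\mathbb R[x_1,x_2]\}$.
   Context: For smooth vector fields $f_1,f_2$ on $\mathbb R^2$ the Lie bracket is $[f_1,f_2]=(\nabla_x f_2)f_1-(\nabla_x f_1)f_2$. $\operatorname{Lie}\mathcal F$ denotes the smallest linear space of smooth vector fields that contains $\mathcal F$ and is closed under the Lie bracket. $\mathbb R[x_1,x_2]$ is the ring of real polynomials in $x_1,x_2$. *)

From Stdlib Require Import Reals List.
From Coquelicot Require Import Coquelicot.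
Open Scope R_scope.

Definition sfun := R -> R -> R.
Definition vfield := R -> R -> R * R.

Definition d1 (g : sfun) : sfun := fun x y => Derive (fun t => g t y) x.
Definition d2 (g : sfun) : sfun := fun x y => Derive (fun t => g x t) y.

Fixpoint iter_partial (ds : list bool) (g : sfun) : sfun :=
  match ds with
  | nil => g
  | d :: ds' => (if d then d2 else d1) (iter_partial ds' g)
  end.

Definition smooth_fun (g : sfun) : Prop :=
  forall (ds : list bool) (x y : R),
    ex_derive (fun t => iter_partial ds g t y) x /\
    ex_derive (fun t => iter_partial ds g x t) y /\
    continuous (fun p : R * R => iter_partial ds g (fst p) (snd p)) (x, y).

Definition comp1 (X : vfield) : sfun := fun x y => fst (X x y).
Definition comp2 (X : vfield) : sfun := fun x y => snd (X x y).

Definition smooth_vf (X : vfield) : Prop :=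
  smooth_fun (comp1 X) /\ smooth_fun (comp2 X).

(* Lie bracket [f1,f2] = (nabla f2) f1 - (nabla f1) f2. *)
Definition lie_bracket (f1 f2 : vfield) : vfield := fun x y =>
  ( d1 (comp1 f2) x y * comp1 f1 x y + d2 (comp1 f2) x y * comp2 f1 x y
    - (d1 (comp1 f1) x y * comp1 f2 x y + d2 (comp1 f1) x y * comp2 f2 x y),
    d1 (comp2 f2) x y * comp1 f1 x y + d2 (comp2 f2) x y * comp2 f1 x y
    - (d1 (comp2 f1) x y * comp1 f2 x y + d2 (comp2 f1) x y * comp2 f2 x y) ).

Definition vf_zero : vfield := fun _ _ => (0, 0).
Definition vf_add (X Y : vfield) : vfield :=
  fun x y => (comp1 X x y + comp1 Y x y, comp2 X x y + comp2 Y x y).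
Definition vf_scale (c : R) (X : vfield) : vfield :=
  fun x y => (c * comp1 X x y, c * comp2 X x y).

Definition smooth_linear_space (S : vfield -> Prop) : Prop :=
  (forall X, S X -> smooth_vf X) /\
  S vf_zero /\
  (forall X Y, S X -> S Y -> S (vf_add X Y)) /\
  (forall c X, S X -> S (vf_scale c X)).

Definition bracket_closed (S : vfield -> Prop) : Prop :=
  forall X Y, S X -> S Y -> S (lie_bracket X Y).

(* Lie F: the smallest linear space of smooth vector fields containing F and
   closed under the Lie bracket (intersection of all such spaces). *)
Definition Lie (F : vfield -> Prop) : vfield -> Prop := fun X =>
  forall S, smooth_linear_space S -> (forall Y, F Y -> S Y) -> bracket_closed S -> S X.

Definition v (f : sfun) : vfield := fun x y => (- d2 f x y, d1 f x y).

(* f is (the polynomial function of) an element of R[x1,x2]: a finite sum of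
   monomials c * x1^i * x2^j. *)
Definition monoms_eval (l : list (R * nat * nat)) : sfun := fun x y =>
  fold_right (fun m acc => match m with (c, i, j) => c * x ^ i * y ^ j + acc end) 0 l.

Definition is_poly2 (f : sfun) : Prop :=
  exists l : list (R * nat * nat), forall x y, f x y = monoms_eval l x y.

Definition F3 : vfield -> Prop := fun X =>
  X = v (fun x1 x2 => x1) \/ X = v (fun x1 x2 => x2) \/
  X = v (fun x1 x2 => x1 ^ 2 * x2 ^ 2).

(* For polynomials f, g the mixed partials commute, so a direct computation gives
   [v f, v g] = v {f, g} with the Poisson bracket {f, g} = f_x1 g_x2 - f_x2 g_x1,
   again a polynomial.  Hence the fields v(f), f polynomial, form a Lie algebra of
   smooth fields containing F, and Lie F lies inside it.  Conversely, brackets of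
   x1, x2, x1^2 x2^2 give every monomial of degree at most 3 (e.g. 1 = {x1, x2}),
   and {x1^3, x1^a x2^(b+1)} = 3(b+1) x1^(a+2) x2^b,
   {x1^(a+1) x2^b, x2^3} = 3(a+1) x1^a x2^(b+2) reach every monomial by induction
   on the degree; v is linear, so every v(f) lies in Lie F. *)

From Stdlib Require Import Reals List Lra Lia FunctionalExtensionality.
From Coquelicot Require Import Coquelicot.
(* Imported last because Stdlib's [Ranalysis1] also defines [d1] and [d2]. *)
Open Scope R_scope.

(* [pred 0 = 0] is harmless: the coefficient of a monomial free of that variable
   becomes [c * INR 0 = 0]. *)
Definition monoms_deriv1 (l : list (R * nat * nat)) : list (R * nat * nat) :=
  map (fun '(c, i, j) => (c * INR i, pred i, j)) l.
Definition monoms_deriv2 (l : list (R * nat * nat)) : list (R * nat * nat) :=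
  map (fun '(c, i, j) => (c * INR j, i, pred j)) l.

Definition monoms_mul (l1 l2 : list (R * nat * nat)) : list (R * nat * nat) :=
  flat_map (fun '(c1, i1, j1) =>
    map (fun '(c2, i2, j2) => (c1 * c2, (i1 + i2)%nat, (j1 + j2)%nat)) l2) l1.

Lemma monoms_eval_cons c i j l x y :
  monoms_eval ((c, i, j) :: l) x y = c * x ^ i * y ^ j + monoms_eval l x y.
Proof. reflexivity. Qed.

Lemma monoms_eval_app l1 l2 x y :
  monoms_eval (l1 ++ l2) x y = monoms_eval l1 x y + monoms_eval l2 x y.
Proof.
  induction l1 as [|[[c i] j] l1 IH]; simpl app.
  - simpl; ring.
  - rewrite !monoms_eval_cons, IH; ring.
Qed.

Lemma monoms_eval_mul l1 l2 x y :
  monoms_eval (monoms_mul l1 l2) x y = monoms_eval l1 x y * monoms_eval l2 x y.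
Proof.
  induction l1 as [|[[c1 i1] j1] l1 IH]; [simpl; ring|].
  unfold monoms_mul; simpl flat_map; fold (monoms_mul l1 l2).
  rewrite monoms_eval_app, IH, monoms_eval_cons, Rmult_plus_distr_r.
  f_equal.
  clear IH; induction l2 as [|[[c2 i2] j2] l2 IH2]; simpl map.
  - change (monoms_eval nil x y) with 0; ring.
  - rewrite !monoms_eval_cons, IH2, !pow_add; ring.
Qed.

Lemma monoms_eval_deriv12 l x y :
  monoms_eval (monoms_deriv1 (monoms_deriv2 l)) x y =
  monoms_eval (monoms_deriv2 (monoms_deriv1 l)) x y.
Proof.
  induction l as [|[[c i] j] l IH]; [reflexivity|].
  simpl; rewrite IH; ring.
Qed.

Lemma is_derive_monoms_eval1 l x y :
  is_derive (fun t => monoms_eval l t y) x (monoms_eval (monoms_deriv1 l) x y).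
Proof.
  induction l as [|[[c i] j] l IH]; simpl monoms_deriv1.
  - exact (is_derive_const (K := R_AbsRing) (V := R_NormedModule) 0 x).
  - rewrite monoms_eval_cons.
    apply (is_derive_plus (K := R_AbsRing) (V := R_NormedModule)
             (fun t => c * t ^ i * y ^ j)); [|exact IH].
    apply (is_derive_ext (fun t => c * y ^ j * t ^ i)); [intro t; simpl; ring|].
    replace (c * INR i * x ^ pred i * y ^ j)
      with (c * y ^ j * (INR i * 1 * x ^ pred i)) by ring.
    apply is_derive_scal, is_derive_pow, (is_derive_id (K := R_AbsRing)).
Qed.

Lemma is_derive_monoms_eval2 l x y :
  is_derive (fun t => monoms_eval l x t) y (monoms_eval (monoms_deriv2 l) x y).
Proof.
  induction l as [|[[c i] j] l IH]; simpl monoms_deriv2.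
  - exact (is_derive_const (K := R_AbsRing) (V := R_NormedModule) 0 y).
  - rewrite monoms_eval_cons.
    apply (is_derive_plus (K := R_AbsRing) (V := R_NormedModule)
             (fun t => c * x ^ i * t ^ j)); [|exact IH].
    replace (c * INR j * x ^ i * y ^ pred j)
      with (c * x ^ i * (INR j * 1 * y ^ pred j)) by ring.
    apply is_derive_scal, is_derive_pow, (is_derive_id (K := R_AbsRing)).
Qed.

Lemma continuous_pow_fun (f : R * R -> R) z n :
  continuous f z -> continuous (fun p => f p ^ n) z.
Proof.
  intro Hf; induction n as [|n IH]; simpl.
  - apply continuous_const.
  - exact (continuous_mult (K := R_AbsRing) _ _ z Hf IH).
Qed.

Lemma continuous_monoms_eval l z :
  continuous (fun p : R * R => monoms_eval l (fst p) (snd p)) z.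
Proof.
  destruct z as [x y].
  induction l as [|[[c i] j] l IH]; [apply continuous_const|].
  apply (continuous_plus (K := R_AbsRing) (V := R_NormedModule)
           (fun p : R * R => c * fst p ^ i * snd p ^ j)); [|exact IH].
  apply (continuous_mult (K := R_AbsRing)); [apply (continuous_mult (K := R_AbsRing))|].
  - apply continuous_const.
  - apply continuous_pow_fun, continuous_fst.
  - apply continuous_pow_fun, continuous_snd.
Qed.

Lemma fun2_ext {A : Type} (f g : R -> R -> A) : (forall x y, f x y = g x y) -> f = g.
Proof. intro H; do 2 (apply functional_extensionality; intro); apply H. Qed.

Lemma is_poly2_ext (f g : sfun) :
  (forall x y, f x y = g x y) -> is_poly2 f -> is_poly2 g.
Proof. intros Hfg [l Hl]; exists l; intros x y; rewrite <- Hfg; apply Hl. Qed.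

Lemma is_poly2_const c : is_poly2 (fun _ _ => c).
Proof. exists ((c, 0%nat, 0%nat) :: nil); intros x y; simpl; ring. Qed.

Lemma is_poly2_add f g :
  is_poly2 f -> is_poly2 g -> is_poly2 (fun x y => f x y + g x y).
Proof.
  intros [l1 H1] [l2 H2]; exists (l1 ++ l2); intros x y.
  rewrite monoms_eval_app, H1, H2; reflexivity.
Qed.

Lemma is_poly2_mul f g :
  is_poly2 f -> is_poly2 g -> is_poly2 (fun x y => f x y * g x y).
Proof.
  intros [l1 H1] [l2 H2]; exists (monoms_mul l1 l2); intros x y.
  rewrite monoms_eval_mul, H1, H2; reflexivity.
Qed.

Lemma is_poly2_scale c f : is_poly2 f -> is_poly2 (fun x y => c * f x y).
Proof. apply is_poly2_mul, is_poly2_const. Qed.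

Lemma is_poly2_sub f g :
  is_poly2 f -> is_poly2 g -> is_poly2 (fun x y => f x y - g x y).
Proof.
  intros Hf Hg; apply (is_poly2_ext (fun x y => f x y + -1 * g x y)).
  - intros x y; ring.
  - apply is_poly2_add, is_poly2_scale; assumption.
Qed.

Lemma d1_monoms_eval l : d1 (monoms_eval l) = monoms_eval (monoms_deriv1 l).
Proof. apply fun2_ext; intros x y; apply is_derive_unique, is_derive_monoms_eval1. Qed.

Lemma d2_monoms_eval l : d2 (monoms_eval l) = monoms_eval (monoms_deriv2 l).
Proof. apply fun2_ext; intros x y; apply is_derive_unique, is_derive_monoms_eval2. Qed.

Lemma is_poly2E f : is_poly2 f -> exists l, f = monoms_eval l.
Proof. intros [l Hl]; exists l; apply fun2_ext, Hl. Qed.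

Lemma is_poly2_d1 f : is_poly2 f -> is_poly2 (d1 f).
Proof.
  intros [l ->]%is_poly2E; exists (monoms_deriv1 l); rewrite d1_monoms_eval; reflexivity.
Qed.

Lemma is_poly2_d2 f : is_poly2 f -> is_poly2 (d2 f).
Proof.
  intros [l ->]%is_poly2E; exists (monoms_deriv2 l); rewrite d2_monoms_eval; reflexivity.
Qed.

Lemma poly_d1_d2 f x y : is_poly2 f -> d1 (d2 f) x y = d2 (d1 f) x y.
Proof.
  intros [l ->]%is_poly2E.
  rewrite d2_monoms_eval, d1_monoms_eval, d1_monoms_eval, d2_monoms_eval.
  apply monoms_eval_deriv12.
Qed.

Definition partially_differentiable (f : sfun) : Prop :=
  forall x y, ex_derive (fun t => f t y) x /\ ex_derive (fun t => f x t) y.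

Lemma poly_partially_differentiable f : is_poly2 f -> partially_differentiable f.
Proof.
  intros Hf x y; destruct (is_poly2E _ Hf) as [l ->]; split; eexists.
  - apply is_derive_monoms_eval1.
  - apply is_derive_monoms_eval2.
Qed.

Lemma smooth_fun_poly f : is_poly2 f -> smooth_fun f.
Proof.
  intros Hf ds x y.
  assert (Hds : is_poly2 (iter_partial ds f)).
  { induction ds as [|[|] ds IH]; simpl;
      [exact Hf | apply is_poly2_d2, IH | apply is_poly2_d1, IH]. }
  destruct (poly_partially_differentiable _ Hds x y) as [H1 H2].
  split; [exact H1 | split; [exact H2|]].
  destruct (is_poly2E _ Hds) as [l ->].
  apply continuous_monoms_eval.
Qed.

Lemma d1_opp f x y : d1 (fun x y => - f x y) x y = - d1 f x y.
Proof. exact (Derive_opp _ _). Qed.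

Lemma d2_opp f x y : d2 (fun x y => - f x y) x y = - d2 f x y.
Proof. exact (Derive_opp _ _). Qed.

Lemma d1_scale c f x y : d1 (fun x y => c * f x y) x y = c * d1 f x y.
Proof. exact (Derive_scal _ _ _). Qed.

Lemma d2_scale c f x y : d2 (fun x y => c * f x y) x y = c * d2 f x y.
Proof. exact (Derive_scal _ _ _). Qed.

Lemma d1_add f g x y :
  partially_differentiable f -> partially_differentiable g ->
  d1 (fun x y => f x y + g x y) x y = d1 f x y + d1 g x y.
Proof. intros Hf Hg; exact (Derive_plus _ _ _ (proj1 (Hf x y)) (proj1 (Hg x y))). Qed.

Lemma d2_add f g x y :
  partially_differentiable f -> partially_differentiable g ->
  d2 (fun x y => f x y + g x y) x y = d2 f x y + d2 g x y.
Proof. intros Hf Hg; exact (Derive_plus _ _ _ (proj2 (Hf x y)) (proj2 (Hg x y))). Qed.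

Lemma v_const c : v (fun _ _ => c) = vf_zero.
Proof.
  apply fun2_ext; intros x y; unfold v, vf_zero, d1, d2.
  rewrite !Derive_const; f_equal; ring.
Qed.

Lemma v_add f g :
  partially_differentiable f -> partially_differentiable g ->
  v (fun x y => f x y + g x y) = vf_add (v f) (v g).
Proof.
  intros Hf Hg; apply fun2_ext; intros x y.
  unfold v, vf_add, comp1, comp2; cbn [fst snd].
  rewrite d1_add, d2_add by assumption; f_equal; ring.
Qed.

Lemma v_scale c f : v (fun x y => c * f x y) = vf_scale c (v f).
Proof.
  apply fun2_ext; intros x y; unfold v, vf_scale, comp1, comp2; cbn [fst snd].
  rewrite d1_scale, d2_scale; f_equal; ring.
Qed.

Lemma comp1_v f : comp1 (v f) = fun x y => - d2 f x y.
Proof. reflexivity. Qed.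

Lemma comp2_v f : comp2 (v f) = d1 f.
Proof. reflexivity. Qed.

Lemma smooth_vf_v f : is_poly2 f -> smooth_vf (v f).
Proof.
  intro Hf; split; apply smooth_fun_poly; rewrite ?comp1_v, ?comp2_v.
  - apply (is_poly2_ext (fun x y => -1 * d2 f x y)); [intros x y; ring|].
    apply is_poly2_scale, is_poly2_d2, Hf.
  - apply is_poly2_d1, Hf.
Qed.

Definition poisson (f g : sfun) : sfun :=
  fun x y => d1 f x y * d2 g x y - d2 f x y * d1 g x y.

Lemma is_poly2_poisson f g : is_poly2 f -> is_poly2 g -> is_poly2 (poisson f g).
Proof.
  intros Hf Hg; apply is_poly2_sub; apply is_poly2_mul;
    auto using is_poly2_d1, is_poly2_d2.
Qed.

Lemma d1_poisson f g x y : is_poly2 f -> is_poly2 g ->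
  d1 (poisson f g) x y =
  d1 (d1 f) x y * d2 g x y + d1 f x y * d1 (d2 g) x y
  - (d1 (d2 f) x y * d1 g x y + d2 f x y * d1 (d1 g) x y).
Proof.
  intros Hf Hg.
  pose proof (fun h Hh => proj1 (poly_partially_differentiable h Hh x y)) as Hd.
  unfold d1 at 1, poisson.
  rewrite Derive_minus, !Derive_mult;
    auto using ex_derive_mult, is_poly2_d1, is_poly2_d2.
Qed.

Lemma d2_poisson f g x y : is_poly2 f -> is_poly2 g ->
  d2 (poisson f g) x y =
  d2 (d1 f) x y * d2 g x y + d1 f x y * d2 (d2 g) x y
  - (d2 (d2 f) x y * d1 g x y + d2 f x y * d2 (d1 g) x y).
Proof.
  intros Hf Hg.
  pose proof (fun h Hh => proj2 (poly_partially_differentiable h Hh x y)) as Hd.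
  unfold d2 at 1, poisson.
  rewrite Derive_minus, !Derive_mult;
    auto using ex_derive_mult, is_poly2_d1, is_poly2_d2.
Qed.

Lemma lie_bracket_v f g : is_poly2 f -> is_poly2 g ->
  lie_bracket (v f) (v g) = v (poisson f g).
Proof.
  intros Hf Hg; apply fun2_ext; intros x y.
  unfold lie_bracket; rewrite !comp1_v, !comp2_v; unfold v.
  rewrite d1_poisson, d2_poisson, !d1_opp, !d2_opp by assumption.
  rewrite !(poly_d1_d2 f), !(poly_d1_d2 g) by assumption.
  f_equal; ring.
Qed.

Lemma Lie_generator (F : vfield -> Prop) X : F X -> Lie F X.
Proof. intros HX S _ HF _; apply HF, HX. Qed.

Lemma Lie_vf_zero (F : vfield -> Prop) : Lie F vf_zero.
Proof. intros S [_ [H0 _]] _ _; exact H0. Qed.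

Lemma Lie_vf_add (F : vfield -> Prop) X Y : Lie F X -> Lie F Y -> Lie F (vf_add X Y).
Proof.
  intros HX HY S HS HF HB; pose proof HS as (_ & _ & Hadd & _).
  apply Hadd; [apply HX | apply HY]; assumption.
Qed.

Lemma Lie_vf_scale (F : vfield -> Prop) c X : Lie F X -> Lie F (vf_scale c X).
Proof.
  intros HX S HS HF HB; pose proof HS as (_ & _ & _ & Hscale).
  apply Hscale, HX; assumption.
Qed.

Lemma Lie_lie_bracket (F : vfield -> Prop) X Y :
  Lie F X -> Lie F Y -> Lie F (lie_bracket X Y).
Proof. intros HX HY S HS HF HB; apply HB; [apply HX | apply HY]; assumption. Qed.

Lemma Lie_v_poisson (F : vfield -> Prop) f g h k :
  is_poly2 f -> is_poly2 g -> k <> 0 ->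
  (forall x y, poisson f g x y = k * h x y) ->
  Lie F (v f) -> Lie F (v g) -> Lie F (v h).
Proof.
  intros Hf Hg Hk Hfgh HLf HLg.
  replace h with (fun x y => / k * poisson f g x y).
  - rewrite v_scale, <- lie_bracket_v by assumption.
    apply Lie_vf_scale, Lie_lie_bracket; assumption.
  - apply fun2_ext; intros x y; rewrite Hfgh; field; exact Hk.
Qed.

Definition polynomial_hamiltonian (X : vfield) : Prop :=
  exists f, is_poly2 f /\ X = v f.

Lemma smooth_linear_space_polynomial_hamiltonian :
  smooth_linear_space polynomial_hamiltonian.
Proof.
  split; [|split; [|split]].
  - intros X [f [Hf ->]]; apply smooth_vf_v, Hf.
  - exists (fun _ _ => 0); split; [apply is_poly2_const | symmetry; apply v_const].
  - intros X Y [f [Hf ->]] [g [Hg ->]].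
    exists (fun x y => f x y + g x y); split; [apply is_poly2_add; assumption|].
    symmetry; apply v_add; apply poly_partially_differentiable; assumption.
  - intros c X [f [Hf ->]].
    exists (fun x y => c * f x y); split; [apply is_poly2_scale, Hf|].
    symmetry; apply v_scale.
Qed.

Lemma bracket_closed_polynomial_hamiltonian : bracket_closed polynomial_hamiltonian.
Proof.
  intros X Y [f [Hf ->]] [g [Hg ->]].
  exists (poisson f g); split; [apply is_poly2_poisson; assumption|].
  apply lie_bracket_v; assumption.
Qed.

Definition monomial (a b : nat) : sfun := fun x y => x ^ a * y ^ b.

Lemma monomialE a b : monomial a b = monoms_eval ((1, a, b) :: nil).
Proof. apply fun2_ext; intros x y; unfold monomial; simpl; ring. Qed.

Lemma is_poly2_monomial a b : is_poly2 (monomial a b).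
Proof. rewrite monomialE; exists ((1, a, b) :: nil); reflexivity. Qed.

Lemma poisson_monomial p q c d x y :
  poisson (monomial p q) (monomial c d) x y =
  INR p * x ^ pred p * y ^ q * (INR d * x ^ c * y ^ pred d)
  - INR q * x ^ p * y ^ pred q * (INR c * x ^ pred c * y ^ d).
Proof.
  unfold poisson; rewrite !monomialE, !d1_monoms_eval, !d2_monoms_eval.
  simpl; ring.
Qed.

Lemma F3_polynomial_hamiltonian X : F3 X -> polynomial_hamiltonian X.
Proof.
  intros [-> | [-> | ->]]; eexists; split; try reflexivity.
  - apply (is_poly2_ext (monomial 1 0)); [intros x y; unfold monomial; simpl; ring|].
    apply is_poly2_monomial.
  - apply (is_poly2_ext (monomial 0 1)); [intros x y; unfold monomial; simpl; ring|].
    apply is_poly2_monomial.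
  - apply is_poly2_monomial.
Qed.

Ltac poisson_monomial_identity :=
  intros x y; rewrite poisson_monomial; unfold monomial; simpl; ring.

Lemma Lie_v_poisson_monomial {F : vfield -> Prop} p q c d a b k : k <> 0 ->
  (forall x y, poisson (monomial p q) (monomial c d) x y = k * monomial a b x y) ->
  Lie F (v (monomial p q)) -> Lie F (v (monomial c d)) ->
  Lie F (v (monomial a b)).
Proof. apply Lie_v_poisson; apply is_poly2_monomial. Qed.

Lemma Lie_F3_x : Lie F3 (v (monomial 1 0)).
Proof.
  replace (monomial 1 0) with (fun x1 x2 : R => x1)
    by (apply fun2_ext; intros x y; unfold monomial; simpl; ring).
  apply Lie_generator; left; reflexivity.
Qed.

Lemma Lie_F3_y : Lie F3 (v (monomial 0 1)).
Proof.
  replace (monomial 0 1) with (fun x1 x2 : R => x2)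
    by (apply fun2_ext; intros x y; unfold monomial; simpl; ring).
  apply Lie_generator; right; left; reflexivity.
Qed.

Lemma Lie_F3_x2y2 : Lie F3 (v (monomial 2 2)).
Proof. apply Lie_generator; right; right; reflexivity. Qed.

Lemma Lie_F3_1 : Lie F3 (v (monomial 0 0)).
Proof.
  apply (Lie_v_poisson_monomial 1 0 0 1 0 0 1);
    [lra | poisson_monomial_identity | apply Lie_F3_x | apply Lie_F3_y].
Qed.

Lemma Lie_F3_x2y : Lie F3 (v (monomial 2 1)).
Proof.
  apply (Lie_v_poisson_monomial 1 0 2 2 2 1 2);
    [lra | poisson_monomial_identity | apply Lie_F3_x | apply Lie_F3_x2y2].
Qed.

Lemma Lie_F3_xy2 : Lie F3 (v (monomial 1 2)).
Proof.
  apply (Lie_v_poisson_monomial 0 1 2 2 1 2 (-2));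
    [lra | poisson_monomial_identity | apply Lie_F3_y | apply Lie_F3_x2y2].
Qed.

Lemma Lie_F3_xy : Lie F3 (v (monomial 1 1)).
Proof.
  apply (Lie_v_poisson_monomial 0 1 2 1 1 1 (-2));
    [lra | poisson_monomial_identity | apply Lie_F3_y | apply Lie_F3_x2y].
Qed.

Lemma Lie_F3_x2 : Lie F3 (v (monomial 2 0)).
Proof.
  apply (Lie_v_poisson_monomial 1 0 2 1 2 0 1);
    [lra | poisson_monomial_identity | apply Lie_F3_x | apply Lie_F3_x2y].
Qed.

Lemma Lie_F3_y2 : Lie F3 (v (monomial 0 2)).
Proof.
  apply (Lie_v_poisson_monomial 0 1 1 2 0 2 (-1));
    [lra | poisson_monomial_identity | apply Lie_F3_y | apply Lie_F3_xy2].
Qed.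

Lemma Lie_F3_x3 : Lie F3 (v (monomial 3 0)).
Proof.
  apply (Lie_v_poisson_monomial 2 0 2 1 3 0 2);
    [lra | poisson_monomial_identity | apply Lie_F3_x2 | apply Lie_F3_x2y].
Qed.

Lemma Lie_F3_y3 : Lie F3 (v (monomial 0 3)).
Proof.
  apply (Lie_v_poisson_monomial 0 2 1 2 0 3 (-2));
    [lra | poisson_monomial_identity | apply Lie_F3_y2 | apply Lie_F3_xy2].
Qed.

Lemma Lie_F3_raise_y a b :
  Lie F3 (v (monomial (S a) b)) -> Lie F3 (v (monomial a (S (S b)))).
Proof.
  intro H; apply (Lie_v_poisson_monomial (S a) b 0 3 a (S (S b)) (3 * INR (S a)));
    [| poisson_monomial_identity | exact H | apply Lie_F3_y3].
  pose proof (lt_0_INR (S a) (Nat.lt_0_succ a)); lra.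
Qed.

Lemma Lie_F3_raise_x a b :
  Lie F3 (v (monomial a (S b))) -> Lie F3 (v (monomial (S (S a)) b)).
Proof.
  intro H; apply (Lie_v_poisson_monomial 3 0 a (S b) (S (S a)) b (3 * INR (S b)));
    [| poisson_monomial_identity | apply Lie_F3_x3 | exact H].
  pose proof (lt_0_INR (S b) (Nat.lt_0_succ b)); lra.
Qed.

Lemma Lie_F3_monomial a b : Lie F3 (v (monomial a b)).
Proof.
  remember (a + b)%nat as n eqn:Hn; revert a b Hn.
  induction n as [n IH] using Wf_nat.lt_wf_ind; intros a b Hn.
  destruct b as [|[|b]].
  - destruct a as [|[|a]]; [apply Lie_F3_1 | apply Lie_F3_x |].
    apply Lie_F3_raise_x, (IH (a + 1)%nat); lia.
  - destruct a as [|[|a]]; [apply Lie_F3_y | apply Lie_F3_xy |].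
    apply Lie_F3_raise_x, (IH (a + 2)%nat); lia.
  - apply Lie_F3_raise_y, (IH (S a + b)%nat); lia.
Qed.

Lemma Lie_F3_poly f : is_poly2 f -> Lie F3 (v f).
Proof.
  intros [l ->]%is_poly2E.
  induction l as [|[[c i] j] l IH].
  - change (monoms_eval nil) with (fun _ _ : R => 0).
    rewrite v_const; apply Lie_vf_zero.
  - replace (monoms_eval ((c, i, j) :: l))
      with (fun x y => c * monomial i j x y + monoms_eval l x y)
      by (apply fun2_ext; intros x y; unfold monomial; simpl; ring).
    rewrite v_add, v_scale.
    + apply Lie_vf_add; [apply Lie_vf_scale, Lie_F3_monomial | exact IH].
    + apply poly_partially_differentiable, is_poly2_scale, is_poly2_monomial.
    + apply poly_partially_differentiable; exists l; reflexivity.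
Qed.

Theorem lemma3p12 :
  forall X : vfield, Lie F3 X <-> (exists f : sfun, is_poly2 f /\ X = v f).
Proof.
  intro X; split.
  - intro HX; apply (HX polynomial_hamiltonian).
    + apply smooth_linear_space_polynomial_hamiltonian.
    + apply F3_polynomial_hamiltonian.
    + apply bracket_closed_polynomial_hamiltonian.
  - intros [f [Hf ->]]; apply Lie_F3_poly, Hf.
Qed.
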